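(* Consider $\min_u F(u)+G(u)$ under the assumptions below, with $G$ convex and $F+G$ strongly convex. Let $\{(y^t,z^t,x^t)\}$ be generated by the modified PR iteration with $\gamma\in(0,\frac1{12L_F})$. Then $(y^t,z^t,x^t)$ converges to some $(\bar y,\bar z,\bar x)$ with $\bar y=\bar z$ and $\bar z$ the unique minimizer of $F+G$, and the convergence is linear: there exist $M>0$ and $r\in(0,1)$ such that for all $t\ge1$, \[ \max\{\|y^t-\bar y\|^2,\|z^t-\bar z\|^2,\|x^t-\bar x\|^2\}\le M r^t . \]
   Context: Assumptions: $F:\mathbb{R}^n\to\mathbb{R}$ is convex and differentiable with $\nabla F$ Lipschitz continuous with modulus at most $L_F>0$; $G:\mathbb{R}^n\to(-\infty,\infty]$ is proper, lower semicontinuous, and $\operatorname{Argmin}_u\{\tau G(u)+\frac12\|u-w\|^2\}$ is nonempty for every $w$ and every $\tau>0$; $F+G$ is coercive. Modified PR iteration: given $x^0$ and $\gamma\in(0,\frac1{12L_F})$, for $t=0,1,\dots$: $y^{t+1}=\operatorname{argmin}_y\{F(y)+\frac{5L_F}{2}\|y\|^2+\frac1{2\gamma}\|y-x^t\|^2\}$; $z^{t+1}\in\operatorname{Argmin}_z\{G(z)-\frac{5L_F}{2}\|z\|^2+\frac1{2\gamma}\|2y^{t+1}-x^t-z\|^2\}$; $x^{t+1}=x^t+2(z^{t+1}-y^{t+1})$. *)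

From Stdlib Require Import Reals Lra.
From Stdlib Require Fin.
Open Scope R_scope.

Definition vec (n : nat) := Fin.t n -> R.

Fixpoint vsum (n : nat) : (Fin.t n -> R) -> R :=
  match n return (Fin.t n -> R) -> R with
  | O => fun _ => 0
  | S m => fun f => f Fin.F1 + vsum m (fun i => f (Fin.FS i))
  end.

Definition vadd {n} (u v : vec n) : vec n := fun i => u i + v i.
Definition vsub {n} (u v : vec n) : vec n := fun i => u i - v i.
Definition vscal {n} (a : R) (u : vec n) : vec n := fun i => a * u i.
Definition inner {n} (u v : vec n) : R := vsum n (fun i => u i * v i).
Definition nsq {n} (u : vec n) : R := inner u u.
Definition norm {n} (u : vec n) : R := sqrt (nsq u).

Definition convex {n} (F : vec n -> R) : Prop :=
  forall x y l, 0 <= l <= 1 ->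
    F (vadd (vscal l x) (vscal (1 - l) y)) <= l * F x + (1 - l) * F y.

Definition is_gradient {n} (F : vec n -> R) (gradF : vec n -> vec n) : Prop :=
  forall x eps, 0 < eps -> exists delta, 0 < delta /\
    forall h, norm h < delta ->
      Rabs (F (vadd x h) - F x - inner (gradF x) h) <= eps * norm h.

Definition lipschitz {n} (g : vec n -> vec n) (L : R) : Prop :=
  forall x y, norm (vsub (g x) (g y)) <= L * norm (vsub x y).

(** Extended-real valued functions with values in (-oo, +oo]:
    [None] stands for +oo, [Some a] for the real a. *)
Definition ext := option R.

Definition lt_ext (r : R) (e : ext) : Prop :=
  match e with None => True | Some a => r < a end.

Definition ext_add (e1 e2 : ext) : ext :=
  match e1, e2 with Some a, Some b => Some (a + b) | _, _ => None end.

Definition proper {n} (G : vec n -> ext) : Prop := exists x a, G x = Some a.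

Definition lsc {n} (G : vec n -> ext) : Prop :=
  forall x m, lt_ext m (G x) -> exists delta, 0 < delta /\
    forall y, norm (vsub y x) < delta -> lt_ext m (G y).

Definition convex_ext {n} (G : vec n -> ext) : Prop :=
  forall x y a b l, G x = Some a -> G y = Some b -> 0 <= l <= 1 ->
    exists c, G (vadd (vscal l x) (vscal (1 - l) y)) = Some c /\
      c <= l * a + (1 - l) * b.

Definition strongly_convex_ext {n} (H : vec n -> ext) : Prop :=
  exists mu, 0 < mu /\
  forall x y a b l, H x = Some a -> H y = Some b -> 0 <= l <= 1 ->
    exists c, H (vadd (vscal l x) (vscal (1 - l) y)) = Some c /\
      c <= l * a + (1 - l) * b - mu / 2 * l * (1 - l) * nsq (vsub x y).

Definition coercive_ext {n} (H : vec n -> ext) : Prop :=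
  forall M, exists R0, forall x, R0 < norm x -> lt_ext M (H x).

Definition is_minimizer_ext {n} (H : vec n -> ext) (u : vec n) : Prop :=
  exists a, H u = Some a /\ forall v b, H v = Some b -> a <= b.

Definition sumFG {n} (F : vec n -> R) (G : vec n -> ext) : vec n -> ext :=
  fun u => ext_add (Some (F u)) (G u).

Definition prox_nonempty {n} (G : vec n -> ext) : Prop :=
  forall (w : vec n) tau, 0 < tau ->
    exists u, is_minimizer_ext
      (fun v => match G v with
                | Some b => Some (tau * b + / 2 * nsq (vsub v w))
                | None => None end) u.

(** The modified Peaceman-Rachford iteration (for t = 0,1,...):
    y^{t+1} = argmin_y F(y) + 5L/2 ||y||^2 + 1/(2 gamma) ||y - x^t||^2
    z^{t+1} in Argmin_z G(z) - 5L/2 ||z||^2 + 1/(2 gamma) ||2y^{t+1} - x^t - z||^2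
    x^{t+1} = x^t + 2 (z^{t+1} - y^{t+1}) *)
Definition modified_PR {n} (F : vec n -> R) (G : vec n -> ext) (L gamma : R)
    (y z x : nat -> vec n) : Prop :=
  forall t : nat,
    (forall v,
       F (y (S t)) + 5 * L / 2 * nsq (y (S t))
         + / (2 * gamma) * nsq (vsub (y (S t)) (x t))
       <= F v + 5 * L / 2 * nsq v + / (2 * gamma) * nsq (vsub v (x t))) /\
    is_minimizer_ext
      (fun v => match G v with
                | Some b => Some (b - 5 * L / 2 * nsq v
                         + / (2 * gamma) * nsq (vsub (vsub (vscal 2 (y (S t))) (x t)) v))
                | None => None end) (z (S t)) /\
    x (S t) = vadd (x t) (vscal 2 (vsub (z (S t)) (y (S t)))).

Definition converges_to {n} (s : nat -> vec n) (l : vec n) : Prop :=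
  forall eps, 0 < eps -> exists N, forall t, (N <= t)%nat -> norm (vsub (s t) l) < eps.

(* Write L for L_F, l = gamma L and ubar for the minimizer of F + G; it exists and is unique
   because F + G is strongly convex and lower semicontinuous (the midpoint inequality turns a
   minimizing sequence into a Cauchy sequence).  The optimality condition of the y-step says
   x^t = y^(t+1) + gamma (grad F (y^(t+1)) + 5 L y^(t+1)), so the candidate limit of x^t is
   xbar = ubar + gamma (grad F ubar + 5 L ubar).  With Y = y^(t+1) - ubar, Z = z^(t+1) - ubar and
   U = gamma (grad F (y^(t+1)) - grad F ubar) one gets x^t - xbar = (1 + 5l) Y + U and
   x^(t+1) - xbar = x^t - xbar + 2 (Z - Y).  Cocoercivity of grad F (Baillon-Haddad), monotonicity
   of the subdifferential of G and the quadratic growth of F + G around ubar are inequalities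
   between inner products of Y, Z, U; combined they give a Fejer-type decrease
   |x^(t+1) - xbar|^2 + 10 l |Z - Y|^2 <= |x^t - xbar|^2 in which |Z - Y|^2 controls
   |x^t - xbar|^2, hence a fixed contraction factor for |x^t - xbar|^2, which also bounds
   |y^(t+1) - ubar|^2 and |z^(t+1) - ubar|^2. *)

From Stdlib Require Import Reals Lra Lia Psatz FunctionalExtensionality ClassicalEpsilon Classical.
Open Scope R_scope.

Lemma vsum_ext m (f g : Fin.t m -> R) : (forall i, f i = g i) -> vsum m f = vsum m g.
Proof.
  induction m as [|m IH]; intro H; simpl; [easy|].
  now rewrite H, (IH (fun i => f (Fin.FS i)) (fun i => g (Fin.FS i)) (fun i => H _)).
Qed.

Lemma vsum_add m (f g : Fin.t m -> R) : vsum m (fun i => f i + g i) = vsum m f + vsum m g.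
Proof. induction m as [|m IH]; simpl; [lra|]. rewrite IH. lra. Qed.

Lemma vsum_scal m c (f : Fin.t m -> R) : vsum m (fun i => c * f i) = c * vsum m f.
Proof. induction m as [|m IH]; simpl; [lra|]. rewrite IH. lra. Qed.

Lemma vsum_sub m (f g : Fin.t m -> R) : vsum m (fun i => f i - g i) = vsum m f - vsum m g.
Proof. induction m as [|m IH]; simpl; [lra|]. rewrite IH. lra. Qed.

Lemma vsum_opp m (f : Fin.t m -> R) : vsum m (fun i => - f i) = - vsum m f.
Proof. induction m as [|m IH]; simpl; [lra|]. rewrite IH. lra. Qed.

Lemma vsum_le m (f g : Fin.t m -> R) : (forall i, f i <= g i) -> vsum m f <= vsum m g.
Proof.
  induction m as [|m IH]; intro H; simpl; [lra|].
  specialize (IH (fun i => f (Fin.FS i)) (fun i => g (Fin.FS i)) (fun i => H _)).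
  specialize (H Fin.F1). lra.
Qed.

Lemma vsum_const m c : vsum m (fun _ => c) = INR m * c.
Proof. induction m as [|m IH]; simpl; [lra|]. rewrite IH. destruct m; simpl; lra. Qed.

Lemma vsum_ge_term m (f : Fin.t m -> R) i : (forall j, 0 <= f j) -> f i <= vsum m f.
Proof.
  intro Hf. assert (Hsum : forall m (f : Fin.t m -> R), (forall j, 0 <= f j) -> 0 <= vsum m f).
  { intros k h Hh. rewrite <- (Rmult_0_r (INR k)), <- vsum_const. now apply vsum_le. }
  induction m as [|m IH]; [inversion i|]. revert f Hf. pattern i. apply Fin.caseS'; intros; simpl.
  - specialize (Hsum m (fun j => f (Fin.FS j)) (fun j => Hf _)). lra.
  - specialize (IH (fun j => f (Fin.FS j)) p (fun j => Hf _)). specialize (Hf Fin.F1). lra.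
Qed.

Section Euclid.
Context {n : nat}.
Implicit Types a b c : vec n.

Lemma vec_ext a b : (forall i, a i = b i) -> a = b.
Proof. intro H. now apply functional_extensionality. Qed.

Lemma inner_comm a b : inner a b = inner b a.
Proof. apply vsum_ext. intro; ring. Qed.

Lemma inner_addl a b c : inner (vadd a b) c = inner a c + inner b c.
Proof. unfold inner, vadd. rewrite <- vsum_add. apply vsum_ext. intro; ring. Qed.
Lemma inner_addr a b c : inner c (vadd a b) = inner c a + inner c b.
Proof. unfold inner, vadd. rewrite <- vsum_add. apply vsum_ext. intro; ring. Qed.
Lemma inner_scall k a c : inner (vscal k a) c = k * inner a c.
Proof. unfold inner, vscal. rewrite <- vsum_scal. apply vsum_ext. intro; ring. Qed.
Lemma inner_scalr k a c : inner c (vscal k a) = k * inner c a.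
Proof. unfold inner, vscal. rewrite <- vsum_scal. apply vsum_ext. intro; ring. Qed.

Lemma nsq_ge0 a : 0 <= nsq a.
Proof.
  unfold nsq, inner. rewrite <- (Rmult_0_r (INR n)), <- vsum_const. apply vsum_le. intro; nra.
Qed.

Lemma nsq_ge_coord a i : a i * a i <= nsq a.
Proof. apply (vsum_ge_term n (fun i => a i * a i)). intro; nra. Qed.

Lemma nsq_le_coord a r : (forall i, a i * a i <= r) -> nsq a <= INR n * r.
Proof. intro H. rewrite <- vsum_const. now apply vsum_le. Qed.

Lemma nsq_le0_coord a : nsq a <= 0 -> forall i, a i = 0.
Proof. intros H i. pose proof (nsq_ge_coord a i). nra. Qed.

Lemma nsq_scal k a : nsq (vscal k a) = k * k * nsq a.
Proof. unfold nsq. rewrite inner_scall, inner_scalr. ring. Qed.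

Lemma norm_ge0 a : 0 <= norm a.
Proof. apply sqrt_pos. Qed.

Lemma norm_sqr a : norm a * norm a = nsq a.
Proof. apply sqrt_sqrt, nsq_ge0. Qed.

Lemma norm_lt_nsq a d : 0 < d -> nsq a < d * d -> norm a < d.
Proof. intros Hd H. pose proof (norm_ge0 a). rewrite <- norm_sqr in H. nra. Qed.

Lemma norm_scal k a : 0 <= k -> norm (vscal k a) = k * norm a.
Proof. intro Hk. unfold norm. rewrite nsq_scal, sqrt_mult_alt, sqrt_square; nra. Qed.

Lemma inner_ge_young a b t : 0 < t -> - (t * nsq a + nsq b / t) / 2 <= inner a b.
Proof.
  intro Ht. pose proof (nsq_ge0 (vadd (vscal t a) b)) as H.
  unfold nsq in *.
  rewrite inner_addl, !inner_addr, !inner_scall, !inner_scalr, (inner_comm b a) in H.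
  apply (Rmult_le_reg_l t); [lra|]. field_simplify; [nra|lra].
Qed.

End Euclid.

Ltac gram_ring :=
  unfold nsq, inner;
  repeat (rewrite <- vsum_scal || rewrite <- vsum_add || rewrite <- vsum_sub
          || rewrite <- vsum_opp);
  apply vsum_ext; intro; unfold vadd, vsub, vscal; field.

Lemma convex_comb_shift {n} (x v : vec n) l :
  vadd (vscal l v) (vscal (1 - l) x) = vadd x (vscal l (vsub v x)).
Proof. apply vec_ext. intro. unfold vadd, vscal, vsub. ring. Qed.

Lemma Rabs_le_between a b : Rabs a <= b -> - b <= a <= b.
Proof.
  intro H. pose proof (Rle_abs a). pose proof (Rle_abs (- a)). rewrite Rabs_Ropp in *. lra.
Qed.

Lemma le_of_le_sub_eps (A B C : R) :
  (forall eps, 0 < eps <= 1 -> B - eps * C <= A) -> B <= A.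
Proof.
  intro H. destruct (Rle_lt_dec B A) as [|HAB]; [easy|].
  set (eps := Rmin 1 ((B - A) / (Rabs C + 1))).
  assert (Heps : 0 < eps <= 1).
  { pose proof (Rabs_pos C).
    split; [apply Rmin_glb_lt; [lra|apply Rdiv_lt_0_compat; lra]|apply Rmin_l]. }
  assert (Hs : eps * (Rabs C + 1) <= B - A).
  { apply Rle_trans with ((B - A) / (Rabs C + 1) * (Rabs C + 1)).
    - apply Rmult_le_compat_r; [pose proof (Rabs_pos C); lra|apply Rmin_r].
    - right. field. pose proof (Rabs_pos C); lra. }
  specialize (H eps Heps). pose proof (Rle_abs C). nra.
Qed.

Section SmoothConvex.
Context {n : nat} (F : vec n -> R) (g : vec n -> vec n).
Hypothesis F_grad : is_gradient F g.

Lemma gradient_small_step x h eps : 0 < eps -> exists l, 0 < l <= 1 /\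
  Rabs (F (vadd x (vscal l h)) - F x - l * inner (g x) h) <= l * (eps * norm h).
Proof.
  intro Heps. destruct (F_grad x eps Heps) as [d [Hd Hrem]].
  pose proof (norm_ge0 h) as Hh.
  set (l := Rmin 1 (d / (norm h + 1))).
  assert (Hl : 0 < l <= 1).
  { split; [apply Rmin_glb_lt; [lra|apply Rdiv_lt_0_compat; lra]|apply Rmin_l]. }
  assert (Hlh : norm (vscal l h) < d).
  { rewrite norm_scal by lra.
    apply Rle_lt_trans with (d / (norm h + 1) * norm h).
    - apply Rmult_le_compat_r; [lra|apply Rmin_r].
    - apply (Rmult_lt_reg_r (norm h + 1)); [lra|]. field_simplify; nra. }
  exists l. split; [easy|].
  specialize (Hrem _ Hlh). rewrite inner_scalr, norm_scal in Hrem by lra. lra.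
Qed.

Hypothesis F_conv : convex F.

Lemma convex_gradient_ineq x v : F x + inner (g x) (vsub v x) <= F v.
Proof.
  apply (le_of_le_sub_eps _ _ (norm (vsub v x))). intros eps [Heps _].
  destruct (gradient_small_step x (vsub v x) eps Heps) as [l [Hl Hrem]].
  apply Rabs_le_between in Hrem.
  pose proof (F_conv v x l ltac:(lra)) as Hc. rewrite convex_comb_shift in Hc.
  apply (Rmult_le_reg_l l); lra.
Qed.

Lemma convex_gradient_lower_near x dl : 0 < dl ->
  exists delta, 0 < delta /\ forall v, norm (vsub v x) < delta -> F x - dl < F v.
Proof.
  intro Hdl. pose proof (nsq_ge0 (g x)) as Hg.
  set (t := dl / (nsq (g x) + 1)).
  assert (Ht : 0 < t) by (apply Rdiv_lt_0_compat; lra).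
  assert (Htg : t * nsq (g x) < dl).
  { apply Rlt_le_trans with (t * (nsq (g x) + 1)); [nra|]. right. unfold t. field. lra. }
  exists (sqrt (dl * t)). split; [apply sqrt_lt_R0; nra|].
  intros v Hv. apply sqrt_lt_0_alt in Hv.
  pose proof (convex_gradient_ineq x v). pose proof (inner_ge_young (g x) (vsub v x) t Ht).
  assert (nsq (vsub v x) / t < dl) by (apply (Rmult_lt_reg_r t); [lra|]; field_simplify; lra).
  lra.
Qed.

Variable L : R.
Hypothesis L_pos : 0 < L.
Hypothesis g_lip : lipschitz g L.

Lemma lipschitz_nsq x v : nsq (vsub (g x) (g v)) <= L * L * nsq (vsub x v).
Proof.
  pose proof (g_lip x v). rewrite <- !norm_sqr.
  pose proof (norm_ge0 (vsub (g x) (g v))). pose proof (norm_ge0 (vsub x v)). nra.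
Qed.

Lemma descent_lemma x v : F v <= F x + inner (g x) (vsub v x) + L * nsq (vsub v x).
Proof.
  pose proof (convex_gradient_ineq v x).
  assert (Hlip : inner (vsub (g v) (g x)) (vsub v x) <= L * nsq (vsub v x)).
  { pose proof (lipschitz_nsq v x).
    pose proof (nsq_ge0 (vsub (vsub (g v) (g x)) (vscal L (vsub v x)))) as Hsq.
    assert (E : nsq (vsub (vsub (g v) (g x)) (vscal L (vsub v x)))
              = nsq (vsub (g v) (g x)) - 2 * L * inner (vsub (g v) (g x)) (vsub v x)
                + L * L * nsq (vsub v x)) by gram_ring.
    nra. }
  assert (E : inner (g v) (vsub x v)
            = - inner (g x) (vsub v x) - inner (vsub (g v) (g x)) (vsub v x)) by gram_ring.
  lra.
Qed.

(* Baillon-Haddad: test the gradient inequality at x against the descent lemma at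
   the point [v - (g v - g x) / (2 L)]. *)
Lemma gradient_ineq_strong x v :
  F x + inner (g x) (vsub v x) + nsq (vsub (g v) (g x)) / (4 * L) <= F v.
Proof.
  set (D := vsub (g v) (g x)). set (s := / (2 * L)). set (w := vsub v (vscal s D)).
  pose proof (convex_gradient_ineq x w) as H1. pose proof (descent_lemma v w) as H2.
  assert (E1 : inner (g x) (vsub w x) = inner (g x) (vsub v x) - s * inner (g x) D)
    by (unfold w, D; gram_ring).
  assert (E2 : inner (g v) (vsub w v) = - s * inner (g v) D) by (unfold w, D; gram_ring).
  assert (E3 : nsq (vsub w v) = s * s * nsq D) by (unfold w, D; gram_ring).
  assert (E4 : inner (g v) D - inner (g x) D = nsq D) by (unfold D; gram_ring).
  assert (Es : L * (s * s) = s / 2) by (unfold s; field; lra).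
  assert (Es' : s / 2 = / (4 * L)) by (unfold s; field; lra).
  assert (E5 : s * inner (g v) D - s * inner (g x) D = s * nsq D) by (rewrite <- E4; ring).
  rewrite E1 in H1. rewrite E2, E3 in H2. unfold Rdiv. rewrite <- Es'.
  assert (E6 : L * (s * s * nsq D) = nsq D * (s / 2)) by (rewrite <- Es; ring).
  clearbody D w s. lra.
Qed.

Lemma gradient_cocoercive x v :
  nsq (vsub (g v) (g x)) <= 2 * L * inner (vsub (g v) (g x)) (vsub v x).
Proof.
  pose proof (gradient_ineq_strong x v). pose proof (gradient_ineq_strong v x).
  assert (E : nsq (vsub (g x) (g v)) = nsq (vsub (g v) (g x))) by gram_ring.
  assert (E2 : inner (vsub (g v) (g x)) (vsub v x)
             = - inner (g x) (vsub v x) - inner (g v) (vsub x v)) by gram_ring.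
  rewrite E in *. apply (Rmult_le_reg_r (/ (2 * L))); [apply Rinv_0_lt_compat; lra|].
  replace (2 * L * inner (vsub (g v) (g x)) (vsub v x) * / (2 * L))
    with (inner (vsub (g v) (g x)) (vsub v x)) by (field; lra).
  assert (nsq (vsub (g v) (g x)) * / (2 * L)
          = nsq (vsub (g v) (g x)) / (4 * L) + nsq (vsub (g v) (g x)) / (4 * L)) by (field; lra).
  lra.
Qed.

Lemma lipschitz_nsq_scaled gamma x v :
  nsq (vscal gamma (vsub (g x) (g v))) <= gamma * L * (gamma * L) * nsq (vsub x v).
Proof.
  rewrite nsq_scal. pose proof (lipschitz_nsq x v).
  apply Rle_trans with (gamma * gamma * (L * L * nsq (vsub x v)));
    [apply Rmult_le_compat_l; nra|right; ring].
Qed.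

Lemma gradient_cocoercive_scaled gamma x v : 0 <= gamma ->
  nsq (vscal gamma (vsub (g v) (g x)))
    <= 2 * (gamma * L) * inner (vsub v x) (vscal gamma (vsub (g v) (g x))).
Proof.
  intro Hg. rewrite nsq_scal, inner_scalr, inner_comm. pose proof (gradient_cocoercive x v).
  apply Rle_trans with (gamma * gamma * (2 * L * inner (vsub (g v) (g x)) (vsub v x)));
    [apply Rmult_le_compat_l; nra|right; ring].
Qed.

End SmoothConvex.

Definition subgradient {n} (G : vec n -> ext) (z s : vec n) : Prop :=
  exists bz, G z = Some bz /\ forall u bu, G u = Some bu -> bz + inner s (vsub u z) <= bu.

Section Optimality.
Context {n : nat}.

Lemma is_gradient_add_quadratic (F : vec n -> R) (g : vec n -> vec n) al be (c : vec n) :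
  is_gradient F g -> 0 <= al -> 0 <= be ->
  is_gradient (fun v => F v + al * nsq v + be * nsq (vsub v c))
    (fun v => vadd (g v) (vadd (vscal (2 * al) v) (vscal (2 * be) (vsub v c)))).
Proof.
  intros Fg Hal Hbe x eps Heps.
  destruct (Fg x (eps / 2) ltac:(lra)) as [d [Hd Hrem]].
  set (K := al + be).
  exists (Rmin d (eps / (2 * K + 1))). split.
  { apply Rmin_glb_lt; [lra|apply Rdiv_lt_0_compat; unfold K; lra]. }
  intros h Hh. specialize (Hrem h (Rlt_le_trans _ _ _ Hh (Rmin_l _ _))).
  assert (Hsmall : K * nsq h <= eps / 2 * norm h).
  { assert (Hh' : norm h <= eps / (2 * K + 1)) by (pose proof (Rmin_r d (eps / (2 * K + 1))); lra).
    assert (HK : K * (eps / (2 * K + 1)) <= eps / 2).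
    { apply (Rmult_le_reg_r (2 * K + 1)); [unfold K; lra|]. field_simplify; unfold K; nra. }
    rewrite <- norm_sqr. pose proof (norm_ge0 h). assert (0 <= K) by (unfold K; lra).
    apply Rle_trans with (K * (eps / (2 * K + 1)) * norm h); [|nra].
    rewrite Rmult_assoc. apply Rmult_le_compat_l; [lra|]. nra. }
  assert (E : nsq (vadd x h) - nsq x - inner (vscal 2 x) h = nsq h
              /\ nsq (vsub (vadd x h) c) - nsq (vsub x c) - inner (vscal 2 (vsub x c)) h = nsq h)
    by (split; gram_ring).
  rewrite inner_addl, !inner_addl, !inner_scall.
  rewrite !inner_scall in E. destruct E as [E1 E2].
  replace (F (vadd x h) + al * nsq (vadd x h) + be * nsq (vsub (vadd x h) c)
           - (F x + al * nsq x + be * nsq (vsub x c))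
           - (inner (g x) h + (2 * al * inner x h + 2 * be * inner (vsub x c) h)))
    with ((F (vadd x h) - F x - inner (g x) h) + K * nsq h) by (unfold K; nra).
  eapply Rle_trans; [apply Rabs_triang|].
  rewrite (Rabs_pos_eq (K * nsq h)) by (pose proof (nsq_ge0 h); unfold K; nra). lra.
Qed.

Lemma gradient_zero_at_minimizer (P : vec n -> R) (gP : vec n -> vec n) y :
  is_gradient P gP -> (forall v, P y <= P v) -> forall i, gP y i = 0.
Proof.
  intros Pg Hmin. apply nsq_le0_coord.
  apply (le_of_le_sub_eps _ _ (norm (gP y))). intros eps [Heps _].
  destruct (gradient_small_step P gP Pg y (vscal (-1) (gP y)) eps Heps) as [l [Hl Hrem]].
  apply Rabs_le_between in Hrem. specialize (Hmin (vadd y (vscal l (vscal (-1) (gP y))))).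
  assert (Hn : norm (vscal (-1) (gP y)) = norm (gP y)).
  { unfold norm. rewrite nsq_scal. f_equal. ring. }
  rewrite inner_scalr, Hn in Hrem. fold (nsq (gP y)) in Hrem.
  apply (Rmult_le_reg_l l); lra.
Qed.

Lemma prox_subgradient (G : vec n -> ext) al be (W z : vec n) :
  convex_ext G -> al <= be ->
  is_minimizer_ext (fun v => match G v with
      | Some b => Some (b - al * nsq v + be * nsq (vsub W v)) | None => None end) z ->
  subgradient G z (vadd (vscal (2 * al) z) (vscal (2 * be) (vsub W z))).
Proof.
  intros Gc Hab [a [Ha Hmin]]. destruct (G z) as [bz|] eqn:Gz; [|discriminate].
  injection Ha as Ha. exists bz. split; [easy|]. intros u bu Gu.
  set (d := vsub u z).
  apply (le_of_le_sub_eps _ _ ((be - al) * nsq d)). intros l Hl.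
  destruct (Gc u z bu bz l Gu Gz ltac:(lra)) as [c [Gc1 Gc2]].
  rewrite convex_comb_shift in Gc1. fold d in Gc1.
  specialize (Hmin (vadd z (vscal l d))). rewrite Gc1 in Hmin. specialize (Hmin _ eq_refl).
  assert (E1 : nsq (vadd z (vscal l d)) = nsq z + 2 * l * inner z d + l * l * nsq d) by gram_ring.
  assert (E2 : nsq (vsub W (vadd z (vscal l d)))
               = nsq (vsub W z) - 2 * l * inner (vsub W z) d + l * l * nsq d) by gram_ring.
  rewrite inner_addl, !inner_scall. rewrite E1, E2, <- Ha in Hmin.
  apply (Rmult_le_reg_l l); [lra|]. nra.
Qed.

Lemma minimizer_subgradient (F : vec n -> R) (g : vec n -> vec n) (G : vec n -> ext) us :
  is_gradient F g -> convex_ext G -> is_minimizer_ext (sumFG F G) us ->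
  subgradient G us (vscal (-1) (g us)).
Proof.
  intros Fg Gc [a [Ha Hmin]]. unfold sumFG, ext_add in Ha.
  destruct (G us) as [bs|] eqn:Gs; [|discriminate]. injection Ha as Ha.
  exists bs. split; [easy|]. intros u bu Gu. rewrite inner_scall. set (h := vsub u us).
  apply (le_of_le_sub_eps _ _ (norm h)). intros eps [Heps _].
  destruct (gradient_small_step F g Fg us h eps Heps) as [l [Hl Hrem]].
  apply Rabs_le_between in Hrem.
  destruct (Gc u us bu bs l Gu Gs ltac:(lra)) as [c [Gc1 Gc2]].
  rewrite convex_comb_shift in Gc1. fold h in Gc1.
  specialize (Hmin (vadd us (vscal l h)) (F (vadd us (vscal l h)) + c)).
  unfold sumFG, ext_add in Hmin. rewrite Gc1 in Hmin. specialize (Hmin eq_refl).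
  apply (Rmult_le_reg_l l); lra.
Qed.

Lemma subgradient_monotone (G : vec n -> ext) z u s t :
  subgradient G z s -> subgradient G u t -> 0 <= inner (vsub s t) (vsub z u).
Proof.
  intros [bz [Gz Hz]] [bu [Gu Hu]]. specialize (Hz u bu Gu). specialize (Hu z bz Gz).
  assert (E : inner (vsub s t) (vsub z u) = - inner s (vsub u z) - inner t (vsub z u)) by gram_ring.
  lra.
Qed.

Lemma sumFG_subgradient (F : vec n -> R) (g : vec n -> vec n) (G : vec n -> ext) z s :
  convex F -> is_gradient F g -> subgradient G z s -> subgradient (sumFG F G) z (vadd (g z) s).
Proof.
  intros Fc Fg [bz [Gz Hz]]. exists (F z + bz). split; [unfold sumFG; now rewrite Gz|].
  intros u bu Hu. unfold sumFG, ext_add in Hu. destruct (G u) as [b|] eqn:Gu; [|discriminate].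
  injection Hu as Hu. subst bu. specialize (Hz u b Gu).
  pose proof (convex_gradient_ineq F g Fg Fc z u). rewrite inner_addl. lra.
Qed.

End Optimality.

Lemma inv_succ_lt eps : 0 < eps -> exists N, forall k, (N <= k)%nat -> / (INR k + 1) < eps.
Proof.
  intro He. destruct (archimed_cor1 eps He) as [N [HN1 HN2]]. exists N. intros k Hk.
  apply le_INR in Hk. assert (0 < INR N) by (apply lt_0_INR; lia).
  apply Rle_lt_trans with (/ INR N); [apply Rinv_le_contravar; lra|easy].
Qed.

Lemma Un_cv_le_eventually (u : nat -> R) l k B :
  Un_cv u l -> (forall j, (k <= j)%nat -> u j <= B) -> l <= B.
Proof.
  intros Hu Hb. destruct (Rle_lt_dec l B) as [|HlB]; [easy|].
  destruct (Hu (l - B)) as [N HN]; [lra|].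
  specialize (HN (max N k) (Nat.le_max_l _ _)). specialize (Hb (max N k) (Nat.le_max_r _ _)).
  unfold Rdist in HN. pose proof (Rle_abs (- (u (max N k) - l))). rewrite Rabs_Ropp in *. lra.
Qed.

Section Completeness.
Context {n : nat}.

Lemma vec_cauchy_converges (w : nat -> vec n) :
  (forall eps, 0 < eps -> exists N, forall j k, (N <= j)%nat -> (N <= k)%nat ->
     nsq (vsub (w j) (w k)) <= eps) ->
  exists wbar, converges_to w wbar.
Proof.
  intro Hc.
  assert (Hcoord : forall i, Cauchy_crit (fun k => w k i)).
  { intros i eps Heps. destruct (Hc (eps * eps / 2)) as [N HN]; [nra|].
    exists N. intros p q Hp Hq. specialize (HN p q Hp Hq).
    pose proof (nsq_ge_coord (vsub (w p) (w q)) i) as Hi.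
    change (vsub (w p) (w q) i) with (w p i - w q i) in Hi.
    unfold Rdist; cbv beta. rewrite <- (Rabs_pos_eq eps) by lra.
    apply Rsqr_lt_abs_0. unfold Rsqr. nra. }
  exists (fun i => proj1_sig (R_complete _ (Hcoord i))).
  intros eps Heps. pose proof (pos_INR n).
  destruct (Hc (eps * eps / (INR n + 1))) as [N HN]; [apply Rdiv_lt_0_compat; nra|].
  exists N. intros k Hk. apply norm_lt_nsq; [easy|].
  apply Rle_lt_trans with (INR n * (eps * eps / (INR n + 1))).
  - apply nsq_le_coord. intro i. unfold vsub.
    destruct (R_complete _ (Hcoord i)) as [wi Hwi]; simpl.
    apply (Un_cv_le_eventually (fun j => (w k i - w j i) * (w k i - w j i)) _ N).
    + assert (Hconst : Un_cv (fun _ => w k i) (w k i)).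
      { intros e He. exists O. intros. unfold Rdist. rewrite Rminus_diag, Rabs_R0. lra. }
      pose proof (CV_minus _ _ _ _ Hconst Hwi) as Hd. exact (CV_mult _ _ _ _ Hd Hd).
    + intros j Hj. pose proof (nsq_ge_coord (vsub (w k) (w j)) i) as Hi.
      change (vsub (w k) (w j) i) with (w k i - w j i) in Hi.
      specialize (HN k j Hk Hj). lra.
  - apply (Rmult_lt_reg_r (INR n + 1)); [lra|]. field_simplify; nra.
Qed.

Lemma lsc_limit_le (H : vec n -> ext) (w : nat -> vec n) wbar c :
  lsc H -> converges_to w wbar ->
  (forall eps, 0 < eps -> exists N, forall k, (N <= k)%nat ->
     exists b, H (w k) = Some b /\ b < c + eps) ->
  exists b, H wbar = Some b /\ b <= c.
Proof.
  intros Hlsc Hw Hval.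
  assert (Hnot : forall dl, 0 < dl -> ~ lt_ext (c + dl) (H wbar)).
  { intros dl Hdl Hlt. destruct (Hlsc wbar _ Hlt) as [rho [Hrho Hnear]].
    destruct (Hw rho Hrho) as [N1 HN1]. destruct (Hval dl Hdl) as [N2 HN2].
    destruct (HN2 (max N1 N2) (Nat.le_max_r _ _)) as [b [Hb Hbc]].
    specialize (Hnear _ (HN1 _ (Nat.le_max_l N1 N2))). rewrite Hb in Hnear. simpl in Hnear. lra. }
  destruct (H wbar) as [b|].
  - exists b. split; [easy|]. destruct (Rle_lt_dec b c) as [|Hcb]; [easy|].
    exfalso. apply (Hnot ((b - c) / 2)); simpl; lra.
  - exfalso. apply (Hnot 1); [lra|easy].
Qed.

Lemma ext_infimum (H : vec n -> ext) :
  proper H -> (exists m, forall v b, H v = Some b -> m <= b) ->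
  exists I, (forall v b, H v = Some b -> I <= b) /\
    forall eps, 0 < eps -> exists v b, H v = Some b /\ b < I + eps.
Proof.
  intros [x0 [a0 Ha0]] [m Hm].
  set (S := fun r => exists v, H v = Some (- r)).
  assert (Sbound : bound S) by (exists (- m); intros r [v Hv]; specialize (Hm _ _ Hv); lra).
  assert (Sne : exists r, S r) by (exists (- a0); exists x0; now rewrite Ropp_involutive).
  destruct (completeness S Sbound Sne) as [s [Hub Hlub]].
  exists (- s). split.
  - intros v b Hv. enough (- b <= s) by lra. apply Hub. exists v. now rewrite Ropp_involutive.
  - intros eps Heps. apply NNPP. intro Hno.
    enough (s <= s - eps) by lra. apply Hlub. intros r [v Hv].
    destruct (Rle_lt_dec r (s - eps)) as [|Hr]; [easy|].
    exfalso. apply Hno. exists v, (- r). split; [easy|lra].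
Qed.

Lemma sumFG_lsc (F : vec n -> R) (g : vec n -> vec n) (G : vec n -> ext) :
  convex F -> is_gradient F g -> lsc G -> lsc (sumFG F G).
Proof.
  intros Fc Fg Gl x m Hm.
  assert (Hdl : exists dl, 0 < dl /\ lt_ext (m - F x + dl) (G x)).
  { unfold sumFG, ext_add in Hm. destruct (G x) as [b|]; simpl in *.
    - exists ((F x + b - m) / 2). split; lra.
    - exists 1. split; [lra|easy]. }
  destruct Hdl as [dl [Hdl Hlt]].
  destruct (convex_gradient_lower_near F g Fg Fc x dl Hdl) as [d1 [Hd1 HF]].
  destruct (Gl x _ Hlt) as [d2 [Hd2 HG]].
  exists (Rmin d1 d2). split; [now apply Rmin_glb_lt|].
  intros y Hy. specialize (HF y (Rlt_le_trans _ _ _ Hy (Rmin_l _ _))).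
  specialize (HG y (Rlt_le_trans _ _ _ Hy (Rmin_r _ _))).
  unfold sumFG, ext_add. destruct (G y); simpl in *; lra.
Qed.

End Completeness.

Section StronglyConvex.
Context {n : nat} (H : vec n -> ext) (mu : R).
Hypothesis mu_pos : 0 < mu.
Hypothesis H_sc : forall x y a b l, H x = Some a -> H y = Some b -> 0 <= l <= 1 ->
  exists c, H (vadd (vscal l x) (vscal (1 - l) y)) = Some c /\
    c <= l * a + (1 - l) * b - mu / 2 * l * (1 - l) * nsq (vsub x y).

Lemma strongly_convex_midpoint u v a b : H u = Some a -> H v = Some b ->
  exists c, H (vadd v (vscal (/ 2) (vsub u v))) = Some c /\
    c <= a / 2 + b / 2 - mu / 8 * nsq (vsub u v).
Proof.
  intros Hu Hv. destruct (H_sc u v a b (/ 2) Hu Hv) as [c [Hc1 Hc2]]; [lra|].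
  rewrite convex_comb_shift in Hc1. exists c. split; [easy|lra].
Qed.

Lemma subgradient_quadratic_growth z s : subgradient H z s ->
  exists bz, H z = Some bz /\ forall v b, H v = Some b ->
    bz + inner s (vsub v z) + mu / 4 * nsq (vsub v z) <= b.
Proof.
  intros [bz [Hz Hsub]]. exists bz. split; [easy|]. intros v b Hv.
  destruct (strongly_convex_midpoint v z b bz Hv Hz) as [c [Hc1 Hc2]].
  specialize (Hsub _ _ Hc1).
  assert (E : vsub (vadd z (vscal (/ 2) (vsub v z))) z = vscal (/ 2) (vsub v z)).
  { apply vec_ext. intro. unfold vsub, vadd, vscal. ring. }
  rewrite E, inner_scalr in Hsub. lra.
Qed.

Lemma subgradient_bounded_below z s : subgradient H z s ->
  exists m, forall v b, H v = Some b -> m <= b.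
Proof.
  intro Hs. destruct (subgradient_quadratic_growth z s Hs) as [bz [Hz Hgrowth]].
  exists (bz - nsq s / mu). intros v b Hv. specialize (Hgrowth v b Hv).
  assert (E : nsq (vadd s (vscal (mu / 2) (vsub v z)))
              = nsq s + mu * inner s (vsub v z) + mu * mu / 4 * nsq (vsub v z)) by gram_ring.
  assert (0 <= nsq s / mu + inner s (vsub v z) + mu / 4 * nsq (vsub v z)).
  { replace (nsq s / mu + inner s (vsub v z) + mu / 4 * nsq (vsub v z))
      with (nsq (vadd s (vscal (mu / 2) (vsub v z))) / mu) by (rewrite E; field; lra).
    apply Rmult_le_pos; [apply nsq_ge0|apply Rlt_le, Rinv_0_lt_compat; lra]. }
  lra.
Qed.

Lemma minimizer_unique u1 u2 :
  is_minimizer_ext H u1 -> is_minimizer_ext H u2 -> u1 = u2.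
Proof.
  intros [a1 [H1 M1]] [a2 [H2 M2]].
  destruct (strongly_convex_midpoint u1 u2 a1 a2 H1 H2) as [c [Hc1 Hc2]].
  pose proof (M1 _ _ Hc1). pose proof (M1 _ _ H2). pose proof (M2 _ _ H1).
  assert (Hz : nsq (vsub u1 u2) <= 0) by (pose proof (nsq_ge0 (vsub u1 u2)); nra).
  apply vec_ext. intro i. pose proof (nsq_le0_coord _ Hz i). unfold vsub in *. lra.
Qed.

Lemma minimizer_subgradient_inner us z s :
  is_minimizer_ext H us -> subgradient H z s -> mu / 4 * nsq (vsub z us) <= inner s (vsub z us).
Proof.
  intros [a [Ha Hmin]] Hs. destruct (subgradient_quadratic_growth z s Hs) as [bz [Hz Hgrowth]].
  specialize (Hgrowth us a Ha). specialize (Hmin z bz Hz).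
  assert (E : inner s (vsub us z) = - inner s (vsub z us)) by gram_ring.
  assert (E' : nsq (vsub us z) = nsq (vsub z us)) by gram_ring.
  rewrite E, E' in Hgrowth. lra.
Qed.

Lemma minimizer_exists z s : lsc H -> subgradient H z s -> exists us, is_minimizer_ext H us.
Proof.
  intros Hlsc Hs.
  assert (Hprop : proper H) by (destruct Hs as [bz [Hz _]]; now exists z, bz).
  destruct (ext_infimum H Hprop (subgradient_bounded_below z s Hs)) as [I [HI HIeps]].
  assert (Hseq : exists w : nat -> vec n, forall k,
             exists b, H (w k) = Some b /\ b < I + / (INR k + 1)).
  { assert (Hk : forall k, exists v b, H v = Some b /\ b < I + / (INR k + 1)).
    { intro k. apply HIeps, Rinv_0_lt_compat. pose proof (pos_INR k). lra. }
    exists (fun k => proj1_sig (constructive_indefinite_description _ (Hk k))).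
    intro k. exact (proj2_sig (constructive_indefinite_description _ (Hk k))). }
  destruct Hseq as [w Hw].
  assert (Hval : forall eps, 0 < eps -> exists N, forall k, (N <= k)%nat ->
             exists b, H (w k) = Some b /\ b < I + eps).
  { intros eps Heps. destruct (inv_succ_lt eps Heps) as [N HN]. exists N. intros k Hk.
    destruct (Hw k) as [b [Hb Hbk]]. exists b. split; [easy|]. specialize (HN k Hk). lra. }
  assert (Hcauchy : forall eps, 0 < eps -> exists N, forall j k, (N <= j)%nat -> (N <= k)%nat ->
             nsq (vsub (w j) (w k)) <= eps).
  { intros eps Heps. destruct (Hval (eps * mu / 8)) as [N HN]; [nra|].
    exists N. intros j k Hj Hk.
    destruct (HN j Hj) as [bj [Hbj Hj']]. destruct (HN k Hk) as [bk [Hbk Hk']].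
    destruct (strongly_convex_midpoint _ _ _ _ Hbj Hbk) as [c [Hc1 Hc2]].
    specialize (HI _ _ Hc1). nra. }
  destruct (vec_cauchy_converges w Hcauchy) as [wbar Hconv].
  destruct (lsc_limit_le H w wbar I Hlsc Hconv Hval) as [b [Hb HbI]].
  exists wbar, b. split; [easy|]. intros v bv Hv. specialize (HI v bv Hv). lra.
Qed.

End StronglyConvex.

Lemma nsq_add_le {n} (a b : vec n) : nsq (vadd a b) <= 2 * nsq a + 2 * nsq b.
Proof.
  pose proof (nsq_ge0 (vsub a b)).
  assert (E : 2 * nsq a + 2 * nsq b = nsq (vadd a b) + nsq (vsub a b)) by gram_ring.
  lra.
Qed.

Section GramStep.
Context {n : nat} (l m : R) (Yd Zd U Q : vec n).
Hypothesis l_pos : 0 < l.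
Hypothesis l_small : l < / 12.

Lemma gram_fejer :
  nsq U <= 2 * l * inner Yd U ->
  inner Zd U <= (1 - 5 * l) * inner (vsub Yd Zd) Zd ->
  nsq (vadd (vadd (vscal (1 + 5 * l) Yd) U) (vscal 2 (vsub Zd Yd))) + 10 * l * nsq (vsub Zd Yd)
    <= nsq (vadd (vscal (1 + 5 * l) Yd) U).
Proof.
  intros Hcoco Hmono.
  set (d := 1 - 5 * l).
  set (yy := nsq Yd). set (zz := nsq Zd). set (uu := nsq U).
  set (yz := inner Yd Zd). set (yu := inner Yd U). set (zu := inner Zd U).
  set (ee := nsq (vsub Zd Yd)).
  assert (Eee : ee = yy - 2 * yz + zz) by (unfold ee, yy, yz, zz; gram_ring).
  assert (EX : nsq (vadd (vscal (1 + 5 * l) Yd) U)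
               = (1 + 5 * l) ^ 2 * yy + 2 * (1 + 5 * l) * yu + uu)
    by (unfold yy, yu, uu; gram_ring).
  assert (EXP : nsq (vadd (vadd (vscal (1 + 5 * l) Yd) U) (vscal 2 (vsub Zd Yd)))
                = d ^ 2 * yy + 4 * zz + uu - 4 * d * yz - 2 * d * yu + 4 * zu)
    by (unfold d, yy, zz, uu, yz, yu, zu; gram_ring).
  assert (Emono : inner (vsub Yd Zd) Zd = yz - zz) by (unfold yz, zz; gram_ring).
  assert (P1 : 0 <= d ^ 2 * ee - 4 * d * (yu - zu) + 4 * uu).
  { replace (d ^ 2 * ee - 4 * d * (yu - zu) + 4 * uu)
      with (nsq (vsub (vscal d (vsub Yd Zd)) (vscal 2 U)))
      by (rewrite Eee; unfold yy, zz, uu, yz, yu, zu; gram_ring).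
    apply nsq_ge0. }
  pose proof (nsq_ge0 U) as Huu. pose proof (nsq_ge0 (vsub Zd Yd)) as Hee. fold uu ee in Huu, Hee.
  rewrite EX, EXP. rewrite Emono in Hmono. fold uu yu in Hcoco. fold zu in Hmono.
  clearbody yy zz uu yz yu zu ee. subst ee. fold d in Hmono.
  assert (Hd : 7 / 12 < d <= 1) by (unfold d; lra).
  assert (Hyu : 0 <= yu) by nra.
  (* For X = (1 + 5 l) Y + U and X' = X + 2 (Z - Y), d (|X|^2 - |X'|^2) / 4 splits into a
     multiple of |Z - Y|^2, the monotonicity slack plus <Y, U>, and -10 l <Y - Z, U>; the last
     term is absorbed by |d (Y - Z) - 2 U|^2 >= 0. *)
  set (P := (d * yz - d * zz - zu) + yu).
  assert (S1 : d * ((1 + 5 * l) ^ 2 * yy + 2 * (1 + 5 * l) * yu + uu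
                    - (d ^ 2 * yy + 4 * zz + uu - 4 * d * yz - 2 * d * yu + 4 * zu)) / 4
               = 5 * l * d * (yy - 2 * yz + zz) + (d + 10 * l) * P - 10 * l * (yu - zu))
    by (unfold P, d; field).
  assert (Hslack : 0 <= d * yz - d * zz - zu) by lra.
  assert (0 <= l * (d * yz - d * zz - zu)) by (apply Rmult_le_pos; lra).
  assert (S3 : uu <= 2 * l * P) by (unfold P; lra).
  assert (A3 : 10 * l * uu <= d * (d + 10 * l) * P).
  { assert (d * (d + 10 * l) >= 1 / 2) by (unfold d; nra).
    assert (0 <= P) by (unfold P; lra). nra. }
  assert (0 < d * d) by nra.
  nra.
Qed.

Lemma gram_z_bound :
  0 < m ->
  m * nsq Zd <= inner (vadd (vscal (1 - 5 * l) (vsub Yd Zd)) Q) Zd ->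
  nsq Q <= l * l * nsq (vsub Zd Yd) ->
  m * m * nsq Zd <= 4 * nsq (vsub Zd Yd).
Proof.
  intros Hm Hgrow Hlip.
  set (W := vadd (vscal (1 - 5 * l) (vsub Yd Zd)) Q) in *.
  assert (HW : nsq W <= 3 * nsq (vsub Zd Yd)).
  { pose proof (nsq_add_le (vscal (1 - 5 * l) (vsub Yd Zd)) Q).
    assert (E : nsq (vscal (1 - 5 * l) (vsub Yd Zd)) = (1 - 5 * l) * (1 - 5 * l) * nsq (vsub Zd Yd))
      by gram_ring.
    pose proof (nsq_ge0 (vsub Zd Yd)).
    assert ((1 - 5 * l) * (1 - 5 * l) <= 1) by nra. assert (l * l <= 1 / 2) by nra.
    assert ((1 - 5 * l) * (1 - 5 * l) * nsq (vsub Zd Yd) <= nsq (vsub Zd Yd)) by nra.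
    assert (l * l * nsq (vsub Zd Yd) <= nsq (vsub Zd Yd) / 2) by nra.
    unfold W. lra. }
  pose proof (nsq_ge0 (vsub (vscal m Zd) (vscal 2 W))) as Hsq.
  assert (E : nsq (vsub (vscal m Zd) (vscal 2 W)) = m * m * nsq Zd - 4 * m * inner W Zd + 4 * nsq W)
    by gram_ring.
  nra.
Qed.

Lemma gram_y_bound :
  nsq U <= 2 * l * inner Yd U -> nsq Yd <= nsq (vadd (vscal (1 + 5 * l) Yd) U).
Proof.
  intro Hcoco. pose proof (nsq_ge0 U). pose proof (nsq_ge0 Yd).
  assert (E : nsq (vadd (vscal (1 + 5 * l) Yd) U)
              = (1 + 5 * l) * (1 + 5 * l) * nsq Yd + 2 * (1 + 5 * l) * inner Yd U + nsq U)
    by gram_ring.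
  assert (0 <= inner Yd U) by nra. nra.
Qed.

Lemma gram_x_bound :
  nsq U <= l * l * nsq Yd -> nsq (vadd (vscal (1 + 5 * l) Yd) U) <= 5 * nsq Yd.
Proof.
  intro Hlip. pose proof (nsq_add_le (vscal (1 + 5 * l) Yd) U). pose proof (nsq_ge0 Yd).
  rewrite nsq_scal in *.
  assert ((1 + 5 * l) * (1 + 5 * l) <= 9 / 4) by nra. assert (l * l <= 1 / 4) by nra.
  assert ((1 + 5 * l) * (1 + 5 * l) * nsq Yd <= 9 / 4 * nsq Yd) by nra.
  assert (l * l * nsq Yd <= 1 / 4 * nsq Yd) by nra.
  lra.
Qed.

Lemma gram_contraction :
  0 < m ->
  nsq U <= 2 * l * inner Yd U ->
  nsq U <= l * l * nsq Yd ->
  inner Zd U <= (1 - 5 * l) * inner (vsub Yd Zd) Zd ->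
  m * nsq Zd <= inner (vadd (vscal (1 - 5 * l) (vsub Yd Zd)) Q) Zd ->
  nsq Q <= l * l * nsq (vsub Zd Yd) ->
  nsq (vadd (vadd (vscal (1 + 5 * l) Yd) U) (vscal 2 (vsub Zd Yd)))
    <= (1 - l * (m * m) / (4 + m * m)) * nsq (vadd (vscal (1 + 5 * l) Yd) U) /\
  nsq Yd <= nsq (vadd (vscal (1 + 5 * l) Yd) U) /\
  nsq Zd <= 2 / (5 * l * (m * m)) * nsq (vadd (vscal (1 + 5 * l) Yd) U).
Proof.
  intros Hm Hcoco HlipU Hmono Hgrow HlipQ.
  pose proof (gram_fejer Hcoco Hmono) as Hfejer.
  pose proof (gram_z_bound Hm Hgrow HlipQ) as Hz.
  pose proof (gram_y_bound Hcoco) as Hy. pose proof (gram_x_bound HlipU) as Hx.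
  assert (Hpar : nsq Yd <= 2 * nsq Zd + 2 * nsq (vsub Zd Yd)).
  { pose proof (nsq_add_le Zd (vsub Yd Zd)).
    assert (vadd Zd (vsub Yd Zd) = Yd) as E by (apply vec_ext; intro; unfold vadd, vsub; ring).
    assert (nsq (vsub Yd Zd) = nsq (vsub Zd Yd)) by gram_ring. rewrite E in *. lra. }
  pose proof (nsq_ge0 (vsub Zd Yd)).
  pose proof (nsq_ge0 (vadd (vadd (vscal (1 + 5 * l) Yd) U) (vscal 2 (vsub Zd Yd)))).
  set (XX := nsq (vadd (vscal (1 + 5 * l) Yd) U)) in *.
  set (XP := nsq (vadd (vadd (vscal (1 + 5 * l) Yd) U) (vscal 2 (vsub Zd Yd)))) in *.
  set (ee := nsq (vsub Zd Yd)) in *. set (zz := nsq Zd) in *. set (yy := nsq Yd) in *.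
  assert (Hm2 : 0 < m * m) by nra.
  assert (Hee : m * m * XX <= (40 + 10 * (m * m)) * ee) by nra.
  split; [|split]; [|easy|].
  - apply (Rmult_le_reg_l (40 + 10 * (m * m))); [lra|].
    replace ((40 + 10 * (m * m)) * ((1 - l * (m * m) / (4 + m * m)) * XX))
      with ((40 + 10 * (m * m)) * XX - 10 * l * (m * m * XX)) by (field; lra).
    assert (10 * l * (m * m * XX) <= 10 * l * ((40 + 10 * (m * m)) * ee))
      by (apply Rmult_le_compat_l; lra).
    assert ((40 + 10 * (m * m)) * (XP + 10 * l * ee) <= (40 + 10 * (m * m)) * XX)
      by (apply Rmult_le_compat_l; lra).
    lra.
  - apply (Rmult_le_reg_l (10 * l * (m * m))); [nra|].
    replace (10 * l * (m * m) * (2 / (5 * l * (m * m)) * XX)) with (4 * XX) by (field; lra).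
    assert (10 * l * (m * m * zz) <= 10 * l * (4 * ee)) by (apply Rmult_le_compat_l; lra).
    lra.
Qed.

End GramStep.

(* The first-order condition of the y-update reads x^t = prox_inverse (y^(t+1)). *)
Definition prox_inverse {n} (g : vec n -> vec n) (LF gamma : R) (y : vec n) : vec n :=
  vadd y (vscal gamma (vadd (g y) (vscal (5 * LF) y))).

Section PRStep.
Context {n : nat} (F : vec n -> R) (g : vec n -> vec n) (G : vec n -> ext) (LF gamma mu : R).
Hypothesis F_conv : convex F.
Hypothesis F_grad : is_gradient F g.
Hypothesis LF_pos : 0 < LF.
Hypothesis g_lip : lipschitz g LF.
Hypothesis G_conv : convex_ext G.
Hypothesis gamma_pos : 0 < gamma.
Hypothesis gamma_small : gamma * LF < / 12.
Hypothesis mu_pos : 0 < mu.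
Hypothesis FG_sc : forall x y a b l, sumFG F G x = Some a -> sumFG F G y = Some b -> 0 <= l <= 1 ->
  exists c, sumFG F G (vadd (vscal l x) (vscal (1 - l) y)) = Some c /\
    c <= l * a + (1 - l) * b - mu / 2 * l * (1 - l) * nsq (vsub x y).
Variable us : vec n.
Hypothesis us_min : is_minimizer_ext (sumFG F G) us.

Lemma pr_step_contraction yv zv :
  subgradient G zv (vadd (vscal (2 * (5 * LF / 2)) zv)
    (vscal (2 * / (2 * gamma)) (vsub (vsub (vscal 2 yv) (prox_inverse g LF gamma yv)) zv))) ->
  let X := vsub (prox_inverse g LF gamma yv) (prox_inverse g LF gamma us) in
  let l := gamma * LF in let m := gamma * mu / 4 in
  nsq (vsub (vadd (prox_inverse g LF gamma yv) (vscal 2 (vsub zv yv))) (prox_inverse g LF gamma us))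
    <= (1 - l * (m * m) / (4 + m * m)) * nsq X /\
  nsq (vsub yv us) <= nsq X /\ nsq (vsub zv us) <= 2 / (5 * l * (m * m)) * nsq X.
Proof.
  intros Hz X l m.
  set (sz := vadd (vscal (2 * (5 * LF / 2)) zv)
               (vscal (2 * / (2 * gamma))
                  (vsub (vsub (vscal 2 yv) (prox_inverse g LF gamma yv)) zv))) in Hz.
  set (Yd := vsub yv us). set (Zd := vsub zv us).
  set (U := vscal gamma (vsub (g yv) (g us))). set (Q := vscal gamma (vsub (g zv) (g yv))).
  assert (EX : X = vadd (vscal (1 + 5 * l) Yd) U).
  { apply vec_ext. intro. unfold X, Yd, U, l, prox_inverse, vadd, vsub, vscal. field. }
  assert (EXn : vsub (vadd (prox_inverse g LF gamma yv) (vscal 2 (vsub zv yv)))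
                  (prox_inverse g LF gamma us) = vadd X (vscal 2 (vsub Zd Yd))).
  { apply vec_ext. intro. unfold X, Yd, Zd, vadd, vsub, vscal. field. }
  rewrite EXn, EX.
  assert (Hm : 0 < m) by (unfold m; nra).
  apply (gram_contraction l m Yd Zd U Q); [unfold l; nra|easy|easy| | | | |].
  - exact (gradient_cocoercive_scaled F g F_grad F_conv LF LF_pos g_lip gamma us yv ltac:(lra)).
  - exact (lipschitz_nsq_scaled g LF g_lip gamma yv us).
  - pose proof (subgradient_monotone G zv us sz (vscal (-1) (g us)) Hz
      (minimizer_subgradient F g G us F_grad G_conv us_min)) as Hmono.
    assert (E : gamma * inner (vsub sz (vscal (-1) (g us))) (vsub zv us)
                = (1 - 5 * l) * inner (vsub Yd Zd) Zd - inner Zd U)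
      by (unfold sz, Yd, Zd, U, l, prox_inverse; gram_ring; lra).
    assert (0 <= gamma * inner (vsub sz (vscal (-1) (g us))) (vsub zv us))
      by (apply Rmult_le_pos; lra).
    lra.
  - pose proof (minimizer_subgradient_inner (sumFG F G) mu FG_sc us zv (vadd (g zv) sz) us_min
      (sumFG_subgradient F g G zv sz F_conv F_grad Hz)) as Hgrow.
    assert (E : gamma * inner (vadd (g zv) sz) Zd
                = inner (vadd (vscal (1 - 5 * l) (vsub Yd Zd)) Q) Zd)
      by (unfold sz, Yd, Zd, Q, l, prox_inverse; gram_ring; lra).
    rewrite <- E. unfold m. fold Zd in Hgrow.
    apply (Rmult_le_compat_l gamma) in Hgrow; [|lra]. lra.
  - assert (E : nsq (vsub Zd Yd) = nsq (vsub zv yv)) by (unfold Zd, Yd; gram_ring).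
    rewrite E. exact (lipschitz_nsq_scaled g LF g_lip gamma zv yv).
Qed.

End PRStep.

Section ModifiedPR.
Context {n : nat} (F : vec n -> R) (g : vec n -> vec n) (G : vec n -> ext) (LF gamma : R)
  (y z x : nat -> vec n).
Hypothesis PR : modified_PR F G LF gamma y z x.

Lemma modified_PR_y_step t : is_gradient F g -> 0 < LF -> 0 < gamma ->
  x t = prox_inverse g LF gamma (y (S t)).
Proof.
  intros Fg HL Hg. destruct (PR t) as [Hy _].
  pose proof (gradient_zero_at_minimizer _ _ (y (S t))
    (is_gradient_add_quadratic F g (5 * LF / 2) (/ (2 * gamma)) (x t) Fg ltac:(lra)
       ltac:(apply Rlt_le, Rinv_0_lt_compat; lra)) Hy) as Hfoc.
  apply vec_ext. intro i. specialize (Hfoc i).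
  unfold prox_inverse, vadd, vscal, vsub in *.
  apply (Rmult_eq_compat_l gamma) in Hfoc. rewrite Rmult_0_r in Hfoc.
  replace (x t i) with (x t i + gamma * (g (y (S t)) i + (2 * (5 * LF / 2) * y (S t) i
    + 2 * / (2 * gamma) * (y (S t) i - x t i)))) by (rewrite Hfoc; ring).
  field. lra.
Qed.

Lemma modified_PR_z_step t : convex_ext G -> 5 * LF / 2 <= / (2 * gamma) ->
  subgradient G (z (S t)) (vadd (vscal (2 * (5 * LF / 2)) (z (S t)))
    (vscal (2 * / (2 * gamma)) (vsub (vsub (vscal 2 (y (S t))) (x t)) (z (S t))))).
Proof. intros Gc Hab. destruct (PR t) as [_ [Hz _]]. now apply prox_subgradient. Qed.

End ModifiedPR.

Lemma geometric_rate (a E : nat -> R) rho K :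
  0 < rho < 1 -> 0 < K -> (forall t, 0 <= a t) ->
  (forall t, a (S t) <= rho * a t) -> (forall t, E (S t) <= K * a t) ->
  exists M, 0 < M /\ forall t, (1 <= t)%nat -> E t <= M * rho ^ t.
Proof.
  intros Hrho HK Ha Hdec HE.
  assert (Hpow : forall t, a t <= rho ^ t * a O).
  { induction t as [|t IH]; simpl; [lra|].
    specialize (Hdec t). apply Rle_trans with (rho * a t); [easy|].
    rewrite Rmult_assoc. apply Rmult_le_compat_l; lra. }
  pose proof (Ha O).
  exists (K * (a O + 1) / rho). split; [apply Rdiv_lt_0_compat; nra|].
  intros [|t] Ht; [lia|]. specialize (HE t). specialize (Hpow t).
  pose proof (pow_lt rho t ltac:(lra)).
  replace (K * (a O + 1) / rho * rho ^ S t) with (K * (rho ^ t * (a O + 1)))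
    by (simpl; field; lra).
  apply Rle_trans with (K * a t); [easy|]. apply Rmult_le_compat_l; nra.
Qed.

Lemma converges_of_geometric {n} (s : nat -> vec n) c M rho :
  0 < M -> 0 < rho < 1 -> (forall t, (1 <= t)%nat -> nsq (vsub (s t) c) <= M * rho ^ t) ->
  converges_to s c.
Proof.
  intros HM Hrho Hs eps Heps.
  destruct (pow_lt_1_zero rho ltac:(rewrite Rabs_pos_eq; lra) (eps * eps / M)) as [N HN];
    [apply Rdiv_lt_0_compat; nra|].
  exists (max N 1). intros t Ht. apply norm_lt_nsq; [easy|].
  specialize (HN t (Nat.le_trans _ _ _ (Nat.le_max_l _ _) Ht)).
  specialize (Hs t (Nat.le_trans _ _ _ (Nat.le_max_r _ _) Ht)).
  rewrite Rabs_pos_eq in HN by (apply pow_le; lra).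
  apply Rle_lt_trans with (M * rho ^ t); [easy|].
  apply (Rmult_lt_compat_l M) in HN; [|easy].
  replace (M * (eps * eps / M)) with (eps * eps) in HN by (field; lra). easy.
Qed.

Lemma pr_rate_bounds l m : 0 < l < / 12 -> 0 < m ->
  0 < 1 - l * (m * m) / (4 + m * m) < 1 /\ 0 < 2 / (5 * l * (m * m)).
Proof.
  intros Hl Hm. assert (Hm2 : 0 < m * m) by nra.
  assert (Hq : 0 < m * m / (4 + m * m) < 1).
  { split; [apply Rdiv_lt_0_compat; lra|].
    apply (Rmult_lt_reg_r (4 + m * m)); [lra|]. field_simplify; lra. }
  replace (l * (m * m) / (4 + m * m)) with (l * (m * m / (4 + m * m))) by (field; lra).
  split; [split; nra|]. apply Rdiv_lt_0_compat; nra.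
Qed.

Lemma gamma_step_bounds LF gamma : 0 < LF -> 0 < gamma -> gamma < / (12 * LF) ->
  gamma * LF < / 12 /\ 5 * LF / 2 <= / (2 * gamma).
Proof.
  intros HL Hg Hg12.
  assert (Hl : gamma * LF < / 12).
  { apply (Rmult_lt_compat_r LF) in Hg12; [|lra].
    rewrite Rinv_mult, Rmult_assoc, Rinv_l, Rmult_1_r in Hg12; lra. }
  split; [easy|]. rewrite Rinv_mult. apply (Rmult_le_reg_l gamma); [lra|].
  replace (gamma * (/ 2 * / gamma)) with (/ 2) by (field; lra). lra.
Qed.

Lemma modified_PR_error_contraction {n} (F : vec n -> R) (g : vec n -> vec n) (G : vec n -> ext)
  (LF gamma mu : R) (y z x : nat -> vec n) us :
  convex F -> is_gradient F g -> 0 < LF -> lipschitz g LF -> convex_ext G ->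
  0 < gamma -> gamma * LF < / 12 -> 5 * LF / 2 <= / (2 * gamma) -> 0 < mu ->
  (forall x y a b l, sumFG F G x = Some a -> sumFG F G y = Some b -> 0 <= l <= 1 ->
    exists c, sumFG F G (vadd (vscal l x) (vscal (1 - l) y)) = Some c /\
      c <= l * a + (1 - l) * b - mu / 2 * l * (1 - l) * nsq (vsub x y)) ->
  is_minimizer_ext (sumFG F G) us -> modified_PR F G LF gamma y z x ->
  let xs := prox_inverse g LF gamma us in
  let l := gamma * LF in let m := gamma * mu / 4 in
  forall t, nsq (vsub (x (S t)) xs) <= (1 - l * (m * m) / (4 + m * m)) * nsq (vsub (x t) xs) /\
    Rmax (nsq (vsub (y (S t)) us)) (Rmax (nsq (vsub (z (S t)) us)) (nsq (vsub (x (S t)) xs)))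
      <= (1 + 2 / (5 * l * (m * m))) * nsq (vsub (x t) xs).
Proof.
  intros Fc Fg HL Flip Gc Hg Hl Hab Hmu Hsc Hus PR xs l m t.
  pose proof (modified_PR_y_step F g G LF gamma y z x PR t Fg HL Hg) as Hy.
  pose proof (modified_PR_z_step F G LF gamma y z x PR t Gc Hab) as Hz.
  rewrite Hy in Hz. destruct (PR t) as [_ [_ Hx]].
  destruct (pr_step_contraction F g G LF gamma mu Fc Fg HL Flip Gc Hg Hl Hmu Hsc us Hus
    (y (S t)) (z (S t)) Hz) as [Hxn [Hyn Hzn]].
  rewrite <- Hy in Hxn, Hyn, Hzn. fold xs l m in Hxn, Hyn, Hzn. rewrite Hx.
  destruct (pr_rate_bounds l m ltac:(unfold l; split; nra) ltac:(unfold m; nra)).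
  pose proof (nsq_ge0 (vsub (x t) xs)).
  split; [easy|]. repeat apply Rmax_lub; nra.
Qed.

Theorem proposition1 (n : nat) (F : vec n -> R) (gradF : vec n -> vec n)
  (G : vec n -> ext) (LF gamma : R) (y z x : nat -> vec n) :
  convex F -> is_gradient F gradF -> 0 < LF -> lipschitz gradF LF ->
  proper G -> lsc G -> prox_nonempty G -> coercive_ext (sumFG F G) ->
  convex_ext G -> strongly_convex_ext (sumFG F G) ->
  0 < gamma -> gamma < / (12 * LF) ->
  modified_PR F G LF gamma y z x ->
  exists ybar zbar xbar : vec n,
    ybar = zbar /\
    is_minimizer_ext (sumFG F G) zbar /\
    (forall u, is_minimizer_ext (sumFG F G) u -> u = zbar) /\
    converges_to y ybar /\ converges_to z zbar /\ converges_to x xbar /\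
    exists M r, 0 < M /\ 0 < r < 1 /\
      forall t : nat, (1 <= t)%nat ->
        Rmax (nsq (vsub (y t) ybar)) (Rmax (nsq (vsub (z t) zbar)) (nsq (vsub (x t) xbar)))
          <= M * r ^ t.
Proof.
  intros Fc Fg HL Flip _ Gl _ _ Gc [mu [Hmu Hsc]] Hg Hg12 PR.
  destruct (gamma_step_bounds LF gamma HL Hg Hg12) as [Hl Hab].
  destruct (minimizer_exists (sumFG F G) mu Hmu Hsc (z 1%nat) _ (sumFG_lsc F gradF G Fc Fg Gl)
    (sumFG_subgradient F gradF G _ _ Fc Fg (modified_PR_z_step F G LF gamma y z x PR O Gc Hab)))
    as [us Hus].
  pose proof (modified_PR_error_contraction F gradF G LF gamma mu y z x us
    Fc Fg HL Flip Gc Hg Hl Hab Hmu Hsc Hus PR) as Hstep. cbv zeta in Hstep.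
  set (xs := prox_inverse gradF LF gamma us) in *.
  set (l := gamma * LF) in *. set (m := gamma * mu / 4) in *.
  destruct (pr_rate_bounds l m ltac:(split; [unfold l; nra|easy]) ltac:(unfold m; nra))
    as [Hrho HK].
  set (rho := 1 - l * (m * m) / (4 + m * m)) in *. set (K := 2 / (5 * l * (m * m))) in *.
  set (E := fun t => Rmax (nsq (vsub (y t) us)) (Rmax (nsq (vsub (z t) us)) (nsq (vsub (x t) xs)))).
  destruct (geometric_rate (fun t => nsq (vsub (x t) xs)) E rho (1 + K) Hrho ltac:(lra)
    (fun t => nsq_ge0 _) (fun t => proj1 (Hstep t)) (fun t => proj2 (Hstep t))) as [M [HM Hrate]].
  assert (Hconv : forall (s : nat -> vec n) c, (forall t, nsq (vsub (s t) c) <= E t) ->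
            converges_to s c).
  { intros s c Hs. apply (converges_of_geometric s c M rho HM Hrho).
    intros t Ht. eapply Rle_trans; [apply Hs|now apply Hrate]. }
  exists us, us, xs. split; [easy|]. split; [easy|].
  split; [intros u Hu; exact (minimizer_unique _ mu Hmu Hsc u us Hu Hus)|].
  split; [apply Hconv; intro t; apply Rmax_l|].
  split; [apply Hconv; intro t; eapply Rle_trans; [apply Rmax_l|apply Rmax_r]|].
  split; [apply Hconv; intro t; eapply Rle_trans; [apply Rmax_r|apply Rmax_r]|].
  exists M, rho. split; [easy|]. split; [easy|exact Hrate].
Qed.
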